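(* Let $(M,J,g)$ be a metallic pseudo-Riemannian manifold with $J^2=pJ+qI$, where $p,q\in\mathbb{R}$ satisfy $p^2+4q\neq 0$. If $dJ=0$, then $\delta J=0$.
   Context: A metallic pseudo-Riemannian manifold $(M,J,g)$ is a manifold with a pseudo-Riemannian metric $g$ and a $g$-symmetric $(1,1)$-tensor field $J$ with $J^2=pJ+qI$ for real $p,q$. With $\nabla$ the Levi-Civita connection of $g$ and $\{E_i\}_{1\le i\le n}$ a local $g$-orthonormal frame, set $(dJ)(X,Y)=(\nabla_XJ)Y-(\nabla_YJ)X$ and $\delta J=-\sum_{i=1}^n(\nabla_{E_i}J)E_i$. *)

(* Local-coordinate model of a metallic pseudo-Riemannian manifold:
   the manifold is an open set U of R^n (a coordinate chart), tensors are
   given by their component functions in the coordinate frame d/dx_k. *)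
From HB Require Import structures.
From mathcomp Require Import all_boot all_order all_algebra.
From mathcomp Require Import all_classical all_reals all_analysis.
Set Implicit Arguments. Unset Strict Implicit. Unset Printing Implicit Defensive.
Import Order.TTheory GRing.Theory Num.Theory.
Import numFieldNormedType.Exports.
Local Open Scope classical_set_scope.
Local Open Scope ring_scope.

Section Coord.
Variables (R : realType) (n : nat).

Definition ebase (k : 'I_n) : 'rV[R]_n := delta_mx 0 k.

Definition pderiv (k : 'I_n) (f : 'rV[R]_n -> R) (x : 'rV[R]_n) : R :=
  'D_(ebase k) f x.

Fixpoint iter_pderiv (s : seq 'I_n) (f : 'rV[R]_n -> R) : 'rV[R]_n -> R :=
  match s with
  | [::] => f
  | k :: s' => pderiv k (iter_pderiv s' f)
  end.

Definition smooth_on (U : set 'rV[R]_n) (f : 'rV[R]_n -> R) : Prop :=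
  forall (s : seq 'I_n) (k : 'I_n) (x : 'rV[R]_n),
    U x -> derivable (iter_pderiv s f) x (ebase k).

Definition smooth_mx_on (U : set 'rV[R]_n) (A : 'rV[R]_n -> 'M[R]_n) : Prop :=
  forall i j : 'I_n, smooth_on U (fun x => A x i j).

Definition pseudo_riemannian_metric (U : set 'rV[R]_n)
    (g : 'rV[R]_n -> 'M[R]_n) : Prop :=
  smooth_mx_on U g /\
  forall x, U x -> (g x)^T = g x /\ g x \in unitmx.

(* metallic structure: smooth (1,1)-tensor J, g-symmetric, J^2 = pJ + qI.
   Components: (J Y)^a = sum_b J a b Y^b, g(X,Y) = sum_ab X^a g a b Y^b. *)
Definition metallic_structure (U : set 'rV[R]_n) (p q : R)
    (g J : 'rV[R]_n -> 'M[R]_n) : Prop :=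
  smooth_mx_on U J /\
  forall x, U x ->
    (J x)^T *m g x = g x *m J x /\
    J x *m J x = p *: J x + q%:M.

(* Christoffel symbols of the Levi-Civita connection:
   Gamma^a_{bc} = 1/2 sum_d g^{ad} (d_b g_{dc} + d_c g_{db} - d_d g_{bc}) *)
Definition christoffel (g : 'rV[R]_n -> 'M[R]_n) (x : 'rV[R]_n)
    (a b c : 'I_n) : R :=
  2^-1 * \sum_(d < n) invmx (g x) a d *
    (pderiv b (fun y => g y d c) x + pderiv c (fun y => g y d b) x
     - pderiv d (fun y => g y b c) x).

(* components of nabla J: (nabla_{d/dx_c} J)^a_b *)
Definition nablaJ (g J : 'rV[R]_n -> 'M[R]_n) (x : 'rV[R]_n)
    (c a b : 'I_n) : R :=
  pderiv c (fun y => J y a b) x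
  + \sum_(e < n) christoffel g x a c e * J x e b
  - \sum_(e < n) J x a e * christoffel g x e c b.

(* (dJ)(X,Y) = (nabla_X J)Y - (nabla_Y J)X; component a of
   (dJ)(d/dx_c, d/dx_b) *)
Definition dJ (g J : 'rV[R]_n -> 'M[R]_n) (x : 'rV[R]_n)
    (c b a : 'I_n) : R :=
  nablaJ g J x c a b - nablaJ g J x b a c.

(* delta J = - sum_i eps_i (nabla_{E_i} J) E_i  (pseudo-orthonormal frame),
   written frame-independently as the metric trace:
   (delta J)^a = - sum_{c,b} g^{cb} (nabla_{d/dx_c} J)^a_b *)
Definition deltaJ (g J : 'rV[R]_n -> 'M[R]_n) (x : 'rV[R]_n) (a : 'I_n) : R :=
  - \sum_(c < n) \sum_(b < n) invmx (g x) c b * nablaJ g J x c a b.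

End Coord.

From HB Require Import structures.
From mathcomp Require Import all_boot all_order all_algebra ring.
From mathcomp Require Import all_classical all_reals all_analysis.
Import Order.TTheory GRing.Theory Num.Theory.
Import numFieldNormedType.Exports.
Local Open Scope classical_set_scope.
Local Open Scope ring_scope.

(* Differentiating J^2 = pJ + q shows that every A = nabla_c J satisfies
   AJ + JA = pA; then JAJ = -qA, and taking traces gives both
   2 tr(AJ) = p tr A and p tr(AJ) = -2q tr A, so (p^2 + 4q) tr A = 0.
   Since nabla g = 0 and J is g-self-adjoint, g (nabla_c J) is symmetric, so
   lowering the index of delta J gives (g delta J)_z = - sum_c (nabla_c J)^c_z,
   which dJ = 0 turns into - tr (nabla_z J) = 0. *)

Section MetallicMatrix.
Context {R : comPzRingType} {m : nat} {J : 'M[R]_m} {p q : R}.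
Hypothesis metallicJ : J *m J = p *: J + q%:M.

Lemma anticomm_commutator (G : 'M[R]_m) :
  (G *m J - J *m G) *m J + J *m (G *m J - J *m G) = p *: (G *m J - J *m G).
Proof.
rewrite mulmxBl mulmxBr -!mulmxA metallicJ !mulmxA metallicJ.
rewrite mulmxDr mulmxDl -scalemxAr -scalemxAl mul_mx_scalar mul_scalar_mx.
by rewrite addrA subrK opprD addrACA subrr addr0 scalerBr.
Qed.

Lemma anticommD (A B : 'M[R]_m) :
  A *m J + J *m A = p *: A -> B *m J + J *m B = p *: B ->
  (A + B) *m J + J *m (A + B) = p *: (A + B).
Proof.
by move=> hA hB; rewrite mulmxDl mulmxDr addrACA hA hB scalerDr.
Qed.

End MetallicMatrix.

Lemma mxtrace_anticomm_metallic {R : fieldType} {m} {J A : 'M[R]_m} {p q : R} :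
  p ^+ 2 + 4 * q != 0 -> J *m J = p *: J + q%:M ->
  A *m J + J *m A = p *: A -> \tr A = 0.
Proof.
move=> hpq metallicJ hA.
have trAJ : 2 * \tr (A *m J) = p * \tr A.
  by rewrite -[p * _]mxtraceZ -hA mxtraceD mxtrace_mulC mulr2n mulrDl mul1r.
have JAJ : J *m A *m J = - q *: A.
  have := congr1 (mulmx J) hA.
  rewrite mulmxDr !mulmxA metallicJ mulmxDl -scalemxAl mul_scalar_mx -scalemxAr.
  by move/(canRL (addrK _)) ->; rewrite opprD addrA subrr add0r scaleNr.
have trJAJ : \tr (J *m A *m J) = p * \tr (A *m J) + q * \tr A.
  rewrite mxtrace_mulC mulmxA metallicJ mulmxDl mxtraceD -scalemxAl mxtraceZ.
  by rewrite mul_scalar_mx mxtraceZ mxtrace_mulC.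
rewrite JAJ mxtraceZ in trJAJ.
have : (p ^+ 2 + 4 * q) * \tr A = 0.
  have -> : (p ^+ 2 + 4 * q) * \tr A =
            p * (2 * \tr (A *m J)) - 2 * (- q * \tr A - q * \tr A).
    by rewrite trAJ; ring.
  by rewrite trJAJ; ring.
by move/eqP; rewrite mulf_eq0 (negbTE hpq) => /eqP.
Qed.

Lemma metric_mul_nabla_sym {R : comPzRingType} {m} {g J D dG G : 'M[R]_m} :
  g^T = g -> J^T *m g = g *m J -> dG = G^T *m g + g *m G ->
  D^T *m g + J^T *m dG = dG *m J + g *m D ->
  (g *m (D + (G *m J - J *m G)))^T = g *m (D + (G *m J - J *m G)).
Proof.
move=> gsym Jsa hdG hD.
have GTg : G^T *m g = dG - g *m G by rewrite hdG addrK.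
have DTg : D^T *m g = dG *m J + g *m D - J^T *m dG by rewrite -hD addrK.
rewrite trmx_mul gsym !linearD linearN /= !trmx_mul !mulmxDl mulNmx DTg.
rewrite -!mulmxA GTg Jsa [G^T *m (g *m J)]mulmxA GTg mulmxBr mulmxBl.
rewrite mulmxA Jsa !mulmxA mulmxN mulmxA opprB addrA.
rewrite [_ + (_ - g *m J *m G)]addrA subrK addrC !addrA subrK.
by rewrite [_ + g *m D]addrC.
Qed.

Lemma metric_contraction_trace {R : comUnitRingType} {m} {g : 'M[R]_m}
    {A : 'I_m -> 'M[R]_m} :
  g \in unitmx -> (forall c, (g *m A c)^T = g *m A c) ->
  (forall a b c, A c a b = A b a c) ->
  g *m \col_a (\sum_c \sum_b invmx g c b * A c a b) = \col_z \tr (A z).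
Proof.
move=> gunit gAsym Asym.
have -> : \col_a (\sum_c \sum_b invmx g c b * A c a b) =
          \sum_c A c *m (row c (invmx g))^T.
  apply/matrixP => a i; rewrite !mxE summxE; apply: eq_bigr => c _.
  by rewrite !mxE; apply: eq_bigr => b _; rewrite !mxE mulrC.
rewrite mulmx_sumr; apply/matrixP => z i; rewrite summxE !mxE.
apply: eq_bigr => c _.
by rewrite mulmxA -gAsym -trmx_mul -row_mul mulKmx // !mxE Asym.
Qed.

Section CoordinateDerivatives.
Context {R : realType} {n : nat}.
Implicit Types (x : 'rV[R]_n) (k : 'I_n).

Definition pderiv_mx {m1 m2} k (M : 'rV[R]_n -> 'M[R]_(m1, m2)) x :
  'M[R]_(m1, m2) :=
  \matrix_(i, j) pderiv k (fun y => M y i j) x.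

Definition derivable_mx {m1 m2} (M : 'rV[R]_n -> 'M[R]_(m1, m2)) x
    (v : 'rV[R]_n) : Prop :=
  forall i j, derivable (fun y => M y i j) x v.

Lemma smooth_mx_derivable (U : set 'rV[R]_n) M x k :
  smooth_mx_on U M -> U x -> derivable_mx M x (ebase R k).
Proof. by move=> sM Ux i j; exact: (sM i j [::] k x Ux). Qed.

Lemma derivable_mx_tr {m1 m2} (M : 'rV[R]_n -> 'M[R]_(m1, m2)) x v :
  derivable_mx M x v -> derivable_mx (fun y => (M y)^T) x v.
Proof.
move=> dM i j; have -> : (fun y => (M y)^T i j) = fun y => M y j i.
  by apply/funext => y; rewrite mxE.
exact: dM.
Qed.

Lemma pderiv_mx_tr {m1 m2} k (M : 'rV[R]_n -> 'M[R]_(m1, m2)) x :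
  pderiv_mx k (fun y => (M y)^T) x = (pderiv_mx k M x)^T.
Proof.
apply/matrixP => i j; rewrite !mxE; congr pderiv.
by apply/funext => y; rewrite mxE.
Qed.

Lemma pderiv_mxM {m1 m2 m3} k (M : 'rV[R]_n -> 'M[R]_(m1, m2))
    (N : 'rV[R]_n -> 'M[R]_(m2, m3)) x :
  derivable_mx M x (ebase R k) -> derivable_mx N x (ebase R k) ->
  pderiv_mx k (fun y => M y *m N y) x =
  pderiv_mx k M x *m N x + M x *m pderiv_mx k N x.
Proof.
move=> dM dN; apply/matrixP => i j; rewrite !mxE -big_split /=.
have -> : (fun y => (M y *m N y) i j) = \sum_l (fun y => M y i l * N y l j).
  by apply/funext => y; rewrite mxE fct_sumE.
rewrite /pderiv derive_sum => [|l]; last exact: derivableM.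
apply: eq_bigr => l _; rewrite deriveM // !mxE.
by rewrite addrC /pderiv; congr (_ + _); apply: mulrC.
Qed.

Lemma pderiv_mx_affine {m1 m2} k (M : 'rV[R]_n -> 'M[R]_(m1, m2)) (a : R)
    (C : 'M[R]_(m1, m2)) x :
  derivable_mx M x (ebase R k) ->
  pderiv_mx k (fun y => a *: M y + C) x = a *: pderiv_mx k M x.
Proof.
move=> dM; apply/matrixP => i j; rewrite !mxE.
have -> : (fun y => (a *: M y + C) i j) =
          a \*: (fun y => M y i j) + cst (C i j).
  by apply/funext => y; rewrite !mxE.
by rewrite /pderiv deriveD ?deriveZ ?derive_cst ?addr0 //; exact: derivableZ.
Qed.

Lemma pderiv_mx_local {m1 m2} (U : set 'rV[R]_n) k
    (M N : 'rV[R]_n -> 'M[R]_(m1, m2)) x :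
  open U -> U x -> (forall y, U y -> M y = N y) ->
  pderiv_mx k M x = pderiv_mx k N x.
Proof.
move=> oU Ux MN; apply/matrixP => i j; rewrite !mxE; apply: near_eq_derive.
by apply: filterS (open_nbhs_nbhs (conj oU Ux)) => y /MN ->.
Qed.

End CoordinateDerivatives.

Arguments smooth_mx_derivable {R n U M x} k.
Arguments pderiv_mx_local {R n m1 m2 U} k {M N x}.

Section LeviCivita.
Context {R : realType} {n : nat}.
Implicit Types (g J : 'rV[R]_n -> 'M[R]_n) (x : 'rV[R]_n).

Definition christoffel_mx g x (c : 'I_n) : 'M[R]_n :=
  \matrix_(a, b) christoffel g x a c b.

Definition nablaJ_mx g J x (c : 'I_n) : 'M[R]_n :=
  \matrix_(a, b) nablaJ g J x c a b.

Lemma nablaJ_mxE g J x c :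
  nablaJ_mx g J x c = pderiv_mx c J x +
    (christoffel_mx g x c *m J x - J x *m christoffel_mx g x c).
Proof.
apply/matrixP => a b; rewrite !mxE /nablaJ -addrA.
by congr (_ + (_ - _)); apply: eq_bigr => e _; rewrite !mxE.
Qed.

Lemma christoffel_metric_compat g x c :
  g x \in unitmx -> (g x)^T = g x ->
  (forall k, (pderiv_mx k g x)^T = pderiv_mx k g x) ->
  pderiv_mx c g x =
  (christoffel_mx g x c)^T *m g x + g x *m christoffel_mx g x c.
Proof.
move=> gunit gsym dgsym.
pose T := \matrix_(d, b) (pderiv c (fun y => g y d b) x
  + pderiv b (fun y => g y d c) x - pderiv d (fun y => g y c b) x).
have gG : g x *m christoffel_mx g x c = 2^-1 *: T.
  suff -> : christoffel_mx g x c = 2^-1 *: (invmx (g x) *m T).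
    by rewrite -scalemxAr mulmxA mulmxV // mul1mx.
  apply/matrixP => a b; rewrite !mxE /christoffel; congr (_ * _).
  by apply: eq_bigr => d _; rewrite !mxE.
have Gg : (christoffel_mx g x c)^T *m g x = 2^-1 *: T^T.
  by rewrite -{1}gsym -trmx_mul gG linearZ.
have dg k i j : pderiv k (fun y => g y i j) x = pderiv k (fun y => g y j i) x.
  by have := congr1 (fun M : 'M[R]_n => M j i) (dgsym k); rewrite !mxE.
rewrite gG Gg -scalerDr; apply/matrixP => a b; rewrite !mxE.
rewrite (dg c b a) (dg b c a) (dg a c b).
by field.
Qed.

End LeviCivita.

Section MetallicChart.
Context {R : realType} {n : nat} {U : set 'rV[R]_n}.
Context {g J : 'rV[R]_n -> 'M[R]_n} {p q : R}.
Hypotheses (oU : open U) (metric_g : pseudo_riemannian_metric U g)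
  (metallic_J : metallic_structure U p q g J).

Lemma pderiv_metric_sym x k : U x -> (pderiv_mx k g x)^T = pderiv_mx k g x.
Proof.
move=> Ux; rewrite -pderiv_mx_tr; apply: (pderiv_mx_local k oU Ux) => y Uy.
exact: (metric_g.2 y Uy).1.
Qed.

Lemma metallic_pderiv_anticomm x c : U x ->
  pderiv_mx c J x *m J x + J x *m pderiv_mx c J x = p *: pderiv_mx c J x.
Proof.
move=> Ux; have dJ := smooth_mx_derivable c metallic_J.1 Ux.
have := pderiv_mx_local c oU Ux (fun y Uy => (metallic_J.2 y Uy).2).
by rewrite pderiv_mxM // pderiv_mx_affine.
Qed.

Lemma metallic_pderiv_self_adjoint x c : U x ->
  (pderiv_mx c J x)^T *m g x + (J x)^T *m pderiv_mx c g x =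
  pderiv_mx c g x *m J x + g x *m pderiv_mx c J x.
Proof.
move=> Ux; have dJ := smooth_mx_derivable c metallic_J.1 Ux.
have dg := smooth_mx_derivable c metric_g.1 Ux.
have := pderiv_mx_local c oU Ux (fun y Uy => (metallic_J.2 y Uy).1).
by rewrite !pderiv_mxM ?pderiv_mx_tr //; exact: derivable_mx_tr.
Qed.

Lemma nablaJ_anticomm x c : U x ->
  nablaJ_mx g J x c *m J x + J x *m nablaJ_mx g J x c = p *: nablaJ_mx g J x c.
Proof.
move=> Ux; have metallicJx := (metallic_J.2 x Ux).2.
rewrite nablaJ_mxE; apply: anticommD.
  exact: metallic_pderiv_anticomm.
exact: anticomm_commutator metallicJx _.
Qed.

Lemma nablaJ_metric_sym x c : U x ->
  (g x *m nablaJ_mx g J x c)^T = g x *m nablaJ_mx g J x c.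
Proof.
move=> Ux; have [gsym gunit] := metric_g.2 x Ux.
rewrite nablaJ_mxE; apply: metric_mul_nabla_sym.
- exact: gsym.
- exact: (metallic_J.2 x Ux).1.
- by apply: christoffel_metric_compat => // k; exact: pderiv_metric_sym.
- exact: metallic_pderiv_self_adjoint.
Qed.

End MetallicChart.

Lemma deltaJ_col {R : realType} {n} (g J : 'rV[R]_n -> 'M[R]_n) x :
  \col_a deltaJ g J x a =
  - \col_a (\sum_c \sum_b invmx (g x) c b * nablaJ_mx g J x c a b).
Proof.
apply/matrixP => a i; rewrite !mxE.
by under eq_bigr do under eq_bigr do rewrite mxE.
Qed.

Theorem mainTheorem2 (R : realType) (n : nat) (U : set 'rV[R]_n)
    (g J : 'rV[R]_n -> 'M[R]_n) (p q : R) :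
  open U ->
  pseudo_riemannian_metric U g ->
  metallic_structure U p q g J ->
  p ^+ 2 + 4 * q != 0 ->
  (forall x, U x -> forall c b a : 'I_n, dJ g J x c b a = 0) ->
  forall x, U x -> forall a : 'I_n, deltaJ g J x a = 0.
Proof.
move=> oU metric_g metallic_J hpq dJ0 x Ux.
have [_ gunit] := metric_g.2 x Ux.
have trace_nablaJ z : \tr (nablaJ_mx g J x z) = 0.
  apply: mxtrace_anticomm_metallic hpq (metallic_J.2 x Ux).2 _.
  exact: nablaJ_anticomm oU metallic_J x z Ux.
have nablaJ_swap c b a : nablaJ_mx g J x c a b = nablaJ_mx g J x b a c.
  by apply/eqP; rewrite !mxE -subr_eq0; apply/eqP; exact: dJ0.
have g_deltaJ : g x *m \col_a deltaJ g J x a = 0.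
  rewrite deltaJ_col mulmxN metric_contraction_trace //.
    by apply/matrixP => z i; rewrite !mxE trace_nablaJ oppr0.
  by move=> c; exact: nablaJ_metric_sym oU metric_g metallic_J x c Ux.
have := congr1 (mulmx (invmx (g x))) g_deltaJ.
by rewrite mulKmx // mulmx0 => /matrixP + a => /(_ a 0); rewrite !mxE.
Qed.
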